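(* Let $P$ and $Q$ be irreducible transition matrices on the finite set $S$, both reversible with respect to $\pi$, with eigenvalues (counting multiplicity) $1=\lambda_1\ge\lambda_2\ge\dots\ge\lambda_n$ for $P$ and $1=\beta_1\ge\beta_2\ge\dots\ge\beta_n$ for $Q$. Suppose $\max_{i\ge2}\lambda_i\le\min_{i\ge2}\beta_i$, i.e. $\lambda_2\le\beta_n$. Then $P$ efficiency-dominates $Q$.
   Context: $S$ is a finite set with $|S|=n$, and $\pi$ is a probability distribution on $S$ with $\pi(x)>0$ for all $x$. A transition matrix $P$ is reversible with respect to $\pi$ if $\pi(x)P(x,y)=\pi(y)P(y,x)$ for all $x,y$ (its eigenvalues are then real); irreducible if every state can be reached from every other with positive probability in some number of steps. For a Markov chain $X_1,X_2,\dots$ with transition matrix $P$ and $X_1\sim\pi$, $v(f,P)=\lim_{N\to\infty}\frac1N\mathrm{Var}\big(\sum_{i=1}^N f(X_i)\big)$. $P$ efficiency-dominates $Q$ if $v(f,P)\le v(f,Q)$ for all $f:S\to\mathbb R$. *)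

From HB Require Import structures.
From mathcomp Require Import all_boot all_order all_algebra.
From mathcomp Require Import all_classical all_reals all_analysis.
Import numFieldNormedType.Exports.
Set Implicit Arguments. Unset Strict Implicit. Unset Printing Implicit Defensive.
Import Order.TTheory GRing.Theory Num.Theory.
Local Open Scope ring_scope.
Local Open Scope classical_set_scope.

Definition prob_dist (R : realType) (n : nat) (pi : 'I_n -> R) : Prop :=
  (forall x, 0 < pi x) /\ \sum_(x < n) pi x = 1.

Definition transition_matrix (R : realType) (n : nat) (P : 'M[R]_n) : Prop :=
  (forall x y, 0 <= P x y) /\ (forall x, \sum_(y < n) P x y = 1).

Definition reversible (R : realType) (n : nat) (pi : 'I_n -> R) (P : 'M[R]_n)
  : Prop := forall x y, pi x * P x y = pi y * P y x.

Definition irreducible (R : realType) (n : nat) (P : 'M[R]_n) : Prop :=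
  forall x y, exists k : nat, 0 < (P ^+ k) x y.

(* Law of the path (X_1, ..., X_{N+1}) of the chain with X_1 ~ pi. *)
Definition path_prob (R : realType) (n : nat) (pi : 'I_n -> R) (P : 'M[R]_n)
  (N : nat) (w : {ffun 'I_N.+1 -> 'I_n}) : R :=
  pi (w ord0) * \prod_(i < N) P (w (widen_ord (leqnSn N) i)) (w (lift ord0 i)).

Definition path_sum (R : realType) (n : nat) (f : 'I_n -> R) (N : nat)
  (w : {ffun 'I_N.+1 -> 'I_n}) : R := \sum_(i < N.+1) f (w i).

Definition path_mean (R : realType) (n : nat) (pi : 'I_n -> R) (P : 'M[R]_n)
  (f : 'I_n -> R) (N : nat) : R :=
  \sum_(w : {ffun 'I_N.+1 -> 'I_n}) path_prob pi P w * path_sum f w.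

Definition path_var (R : realType) (n : nat) (pi : 'I_n -> R) (P : 'M[R]_n)
  (f : 'I_n -> R) (N : nat) : R :=
  \sum_(w : {ffun 'I_N.+1 -> 'I_n})
     path_prob pi P w * (path_sum f w - path_mean pi P f N) ^+ 2.

Definition avg_var (R : realType) (n : nat) (pi : 'I_n -> R) (P : 'M[R]_n)
  (f : 'I_n -> R) (N : nat) : R :=
  path_var pi P f N / N.+1%:R.

Definition asymp_var (R : realType) (n : nat) (pi : 'I_n -> R) (P : 'M[R]_n)
  (f : 'I_n -> R) (v : R) : Prop :=
  (avg_var pi P f @ \oo --> v)%classic.

Definition efficiency_dominates (R : realType) (n : nat) (pi : 'I_n -> R)
  (P Q : 'M[R]_n) : Prop :=
  forall f : 'I_n -> R, exists vP vQ : R,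
    asymp_var pi P f vP /\ asymp_var pi Q f vQ /\ vP <= vQ.

Definition ordered_spectrum (R : realType) (n : nat) (A : 'M[R]_n)
  (lam : 'I_n -> R) : Prop :=
  char_poly A = \prod_(i < n) ('X - (lam i)%:P) /\
  (forall i j : 'I_n, (i <= j)%N -> lam j <= lam i).

(* Reversibility makes S = D^(1/2) P D^(-1/2), D = diag pi, a symmetric matrix, so it has
   real eigenvectors e_j (eigenvalues d_j) with sum_j e_j^T e_j = 1.  Expanding
   sqrt(pi) h, for the centred function h = f - E_pi f, along them writes every
   autocovariance Cov(h(X_0), h(X_k)) as sum_j w_j d_j^k, with weights w_j >= 0 of total
   mass Var_pi f.  Since Var(sum_{i<=N} f(X_i)) = sum_{s,t<=N} Cov(h(X_0), h(X_|s-t|))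
   and (1/N) sum_{s,t<=N} d^|s-t| tends to (1+d)/(1-d), this gives
   v(f,P) = sum_j w_j (1+d_j)/(1-d_j).  By irreducibility the eigenvalue 1 carries no
   weight, so every d_j with w_j <> 0 is some lambda_i with i >= 2.  As d |-> (1+d)/(1-d)
   is increasing and the weights of P and Q have the same mass, lambda_i <= beta_j for
   all i, j >= 2 yields v(f,P) <= v(f,Q). *)

From HB Require Import structures.
From mathcomp Require Import all_boot all_order all_algebra.
From mathcomp Require Import all_classical all_reals all_analysis.
From mathcomp Require Import ring lra zify.
From mathcomp Require complex spectral sesquilinear.
Import numFieldNormedType.Exports.
Import Order.TTheory GRing.Theory Num.Theory.
Set Implicit Arguments. Unset Strict Implicit. Unset Printing Implicit Defensive.
Local Open Scope ring_scope.

Section RealSymmetricSpectral.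
Import complex spectral sesquilinear.
Local Open Scope complex_scope.
Local Open Scope sesquilinear_scope.
Variable R : rcfType.
Local Notation rc := (real_complex R).
Local Notation Re := (@complex.Re R).
Local Notation Im := (@complex.Im R).

Lemma scalar_real_mul (f : {scalar Rcomplex R}) (a : R) (z : R[i]) :
  f (a%:C * z) = a * f z.
Proof.
have -> : a%:C * z = @GRing.scale _ (Rcomplex R) a z by case: z => x y; simpc.
exact: linearZ.
Qed.

Lemma map_mx_scalar_mulmx_real m n p (f : {scalar Rcomplex R})
    (u : 'M[R[i]]_(m, n)) (B : 'M[R]_(n, p)) :
  map_mx f (u *m map_mx rc B) = map_mx f u *m B.
Proof.
apply/matrixP => i j; rewrite !mxE raddf_sum; apply: eq_bigr => k _.
by rewrite !mxE mulrC [RHS]mulrC; apply: scalar_real_mul.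
Qed.

Lemma map_mx_scalar_real_mulmx m n p (f : {scalar Rcomplex R})
    (B : 'M[R]_(m, n)) (u : 'M[R[i]]_(n, p)) :
  map_mx f (map_mx rc B *m u) = B *m map_mx f u.
Proof.
apply/matrixP => i j; rewrite !mxE raddf_sum; apply: eq_bigr => k _.
by rewrite !mxE; apply: scalar_real_mul.
Qed.

Lemma Re_conjC_mul (a b : R[i]) : Re (a^* * b) = Re a * Re b + Im a * Im b.
Proof. by case: a b => [x y] [u v]; simpc. Qed.

(* The rows of E are the real and imaginary parts of the rows of a unitary U diagonalising
   A over R[i]; they are real eigenvectors since A is real, and E^T E = Re (U^* U) = 1. *)
Lemma symmetric_eigenframe n (A : 'M[R]_n) : A^T = A ->
  exists (E : 'M[R]_(n + n, n)) (d : 'rV[R]_(n + n)),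
    E^T *m E = 1%:M /\ E *m A = diag_mx d *m E.
Proof.
move=> symA; pose Ac := map_mx rc A.
have Ac_real : Ac \is a realmx.
  by apply/mxOverP => i j; rewrite mxE; apply/complex_realP; exists (A i j).
have Ac_sym : Ac \is symmetricmx.
  by apply/is_hermitianmxP; rewrite expr0 scale1r map_mx_id // /Ac map_trmx symA.
have Ac_herm := realsym_hermsym Ac_sym Ac_real.
pose U := spectralmx Ac; pose D := spectral_diag Ac.
have U_unitary : U \is unitarymx := spectral_unitarymx Ac.
have UAc : U *m Ac = diag_mx D *m U.
  have /orthomx_spectralP -> := hermitian_normalmx Ac_herm.
  by rewrite !mulmxA mulmxV ?spectral_unit // mul1mx.
pose delta := map_mx Re D.
have Dreal : D = map_mx rc delta.
  apply/matrixP => i j; rewrite !mxE RRe_real //.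
  exact: (mxOverP (hermitian_spectral_diag_real Ac_herm)).
exists (col_mx (map_mx Re U) (map_mx Im U)), (row_mx delta delta).
split.
  have UtU : U^t* *m U = 1%:M by rewrite -invmx_unitary // mulVmx ?spectral_unit.
  rewrite tr_col_mx mul_row_col.
  have -> : (map_mx Re U)^T *m map_mx Re U + (map_mx Im U)^T *m map_mx Im U =
            map_mx Re (U^t* *m U).
    apply/matrixP => i j; rewrite !mxE raddf_sum -big_split; apply: eq_bigr => k _.
    by rewrite !mxE; apply/esym/Re_conjC_mul.
  by rewrite UtU; apply/matrixP => i j; rewrite !mxE; case: (i == j).
rewrite mul_col_mx diag_mx_row mul_block_col !mul0mx addr0 add0r.
have diagD : diag_mx D = map_mx rc (diag_mx delta).
  by rewrite Dreal map_diag_mx.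
by rewrite -!map_mx_scalar_mulmx_real -!map_mx_scalar_real_mulmx UAc diagD.
Qed.
End RealSymmetricSpectral.

Section Eigenframe.
Variables (R : comPzRingType) (m n : nat) (E : 'M[R]_(m, n)) (d : 'rV[R]_m) (A : 'M[R]_n).
Hypotheses (E_tight : E^T *m E = 1%:M) (E_eigen : E *m A = diag_mx d *m E).

Lemma eigenframe_exp k : A ^+ k = E^T *m diag_mx (\row_j (d 0 j ^+ k)) *m E.
Proof.
elim: k => [|k IHk].
  rewrite expr0 -idmxE -E_tight (_ : \row_j _ = const_mx 1) ?diag_const_mx ?mulmx1 //.
  by apply/rowP => j; rewrite !mxE.
rewrite exprSr IHk -mulmxE -!mulmxA E_eigen [diag_mx _ *m (_ *m E)]mulmxA mulmx_diag.
by do 2!congr (_ *m _); congr diag_mx; apply/rowP => j; rewrite !mxE exprSr.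
Qed.

Lemma eigenframe_quad_exp (x : 'rV[R]_n) k :
  (x *m A ^+ k *m x^T) 0 0 = \sum_j (x *m E^T) 0 j ^+ 2 * d 0 j ^+ k.
Proof.
have xEt : E *m x^T = (x *m E^T)^T by rewrite trmx_mul trmxK.
rewrite eigenframe_exp !mulmxA -[_ *m E *m x^T]mulmxA xEt mxE.
by apply: eq_bigr => j _; rewrite mul_mx_diag !mxE mulrAC -expr2.
Qed.

Lemma eigenframe_row_eigen j : row j E *m A = d 0 j *: row j E.
Proof. by rewrite -row_mul E_eigen mul_diag_mx; apply/rowP => y; rewrite !mxE. Qed.
End Eigenframe.

Section MatrixSums.
Variables (R : pzSemiRingType) (n : nat).

Lemma sum_mulmx_mulr m p (A : 'M[R]_(m, n)) (B : 'M[R]_(n, p)) (h : 'I_p -> R) x :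
  \sum_y (A *m B) x y * h y = \sum_z A x z * \sum_y B z y * h y.
Proof.
under eq_bigr do rewrite mxE big_distrl /=.
rewrite exchange_big /=; apply: eq_bigr => z _; rewrite mulr_sumr.
by apply: eq_bigr => y _; rewrite mulrA.
Qed.

Lemma sum_mulr_mulmx m p (mu : 'I_m -> R) (A : 'M[R]_(m, n)) (B : 'M[R]_(n, p)) y :
  \sum_x mu x * (A *m B) x y = \sum_z (\sum_x mu x * A x z) * B z y.
Proof.
under eq_bigr do rewrite mxE big_distrr /=.
rewrite exchange_big /=; apply: eq_bigr => z _; rewrite mulr_suml.
by apply: eq_bigr => x _; rewrite mulrA.
Qed.

Lemma sum_mx1_mulr (h : 'I_n -> R) x : \sum_y (1%:M : 'M[R]_n) x y * h y = h x.
Proof.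
rewrite (bigD1 x) //= big1 => [|y /negbTE yx]; first by rewrite mxE eqxx mul1r addr0.
by rewrite mxE eq_sym yx mul0r.
Qed.

Lemma sum_mulr_mx1 (h : 'I_n -> R) y : \sum_x h x * (1%:M : 'M[R]_n) x y = h y.
Proof.
rewrite (bigD1 y) //= big1 => [|x /negbTE xy]; first by rewrite mxE eqxx mulr1 addr0.
by rewrite mxE xy mulr0.
Qed.
End MatrixSums.

Section OrderedSpectrum.
Variables (R : realType) (n : nat) (A : 'M[R]_n) (lam : 'I_n -> R).
Hypothesis A_spec : ordered_spectrum A lam.

Lemma ordered_spectrum_root a : eigenvalue A a -> exists i, a = lam i.
Proof.
rewrite eigenvalue_root_char (proj1 A_spec) /root horner_prod.
by move=> /prodf_eq0[i _]; rewrite hornerXsubC subr_eq0 => /eqP ->; exists i.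
Qed.

Lemma ordered_spectrum_eigenvalue i : eigenvalue A (lam i).
Proof.
rewrite eigenvalue_root_char (proj1 A_spec) /root horner_prod.
by apply/prodf_eq0; exists i => //; rewrite hornerXsubC subrr.
Qed.
End OrderedSpectrum.

Section Stochastic.
Variables (R : realType) (n : nat).

Lemma transition_matrix1 : transition_matrix (1%:M : 'M[R]_n).
Proof.
split=> [x y|x]; first by rewrite mxE ler0n.
by under eq_bigr do rewrite -[_ x _]mulr1; rewrite sum_mx1_mulr.
Qed.

Lemma transition_matrixM (P Q : 'M[R]_n) :
  transition_matrix P -> transition_matrix Q -> transition_matrix (P *m Q).
Proof.
move=> [P_ge0 P_sum1] [Q_ge0 Q_sum1]; split=> [x y|x].
  by rewrite mxE; apply: sumr_ge0 => z _; rewrite mulr_ge0.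
under eq_bigr do rewrite -[_ x _]mulr1.
rewrite sum_mulmx_mulr; under eq_bigr do under eq_bigr do rewrite mulr1.
by under eq_bigr do rewrite Q_sum1 mulr1.
Qed.

Variable P : 'M[R]_n.
Hypothesis P_stoch : transition_matrix P.

Lemma transition_matrixX k : transition_matrix (P ^+ k).
Proof.
elim: k => [|k IHk]; first exact: transition_matrix1.
by rewrite exprS; apply: transition_matrixM.
Qed.

Lemma harmonicX (g : 'I_n -> R) : (forall x, \sum_y P x y * g y = g x) ->
  forall k x, \sum_y (P ^+ k) x y * g y = g x.
Proof.
move=> g_harm; elim=> [|k IHk] x; first exact: sum_mx1_mulr.
by rewrite exprS sum_mulmx_mulr; under eq_bigr do rewrite IHk.
Qed.

(* Maximum principle: at a maximum m of g, g = P^k g forces g = g m wherever P^k m > 0. *)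
Lemma irreducible_harmonic_const (g : 'I_n -> R) : irreducible P ->
  (forall x, \sum_y P x y * g y = g x) -> forall x y, g x = g y.
Proof.
move=> P_irr g_harm x0.
have [m _ g_le_m] := @arg_maxP _ _ _ x0 predT g isT.
suff g_max y : g y = g m by move=> y; rewrite !g_max.
have [k Pk_my] := P_irr m y.
have [Pk_ge0 Pk_sum1] := transition_matrixX k.
have : \sum_z (P ^+ k) m z * (g m - g z) = 0.
  under eq_bigr do rewrite mulrBr.
  by rewrite sumrB -mulr_suml Pk_sum1 mul1r harmonicX // subrr.
move=> /psumr_eq0P terms0.
have /terms0/(_ y isT)/eqP : forall z, true -> 0 <= (P ^+ k) m z * (g m - g z).
  by move=> z _; rewrite mulr_ge0 ?Pk_ge0 // subr_ge0; apply: g_le_m.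
by rewrite mulf_eq0 gt_eqF //= subr_eq0 => /eqP.
Qed.

Lemma left_eigenvalue_norm_le1 (w : 'rV[R]_n) a :
  w != 0 -> w *m P = a *: w -> `|a| <= 1.
Proof.
move=> w_neq0 wP.
have [P_ge0 P_sum1] := P_stoch.
have norm_wP y : `|a| * `|w 0 y| <= \sum_x `|w 0 x| * P x y.
  move/rowP: wP => /(_ y); rewrite !mxE => wPy.
  rewrite -normrM -wPy (le_trans (ler_norm_sum _ _ _)) //.
  by apply: ler_sum => x _; rewrite normrM (ger0_norm (P_ge0 x y)).
have [y0 wy0] : exists y, w 0 y != 0.
  apply/existsP; apply: contraNT w_neq0 => /existsPn w0; apply/eqP/rowP => y.
  by move: (w0 y); rewrite negbK mxE => /eqP.
have norm_gt0 : 0 < \sum_y `|w 0 y|.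
  by rewrite (bigD1 y0) //= ltr_pwDl ?normr_gt0 ?sumr_ge0.
rewrite -(ler_pM2r norm_gt0) mul1r mulr_sumr.
apply: le_trans (ler_sum _ (fun y _ => norm_wP y)) _.
rewrite exchange_big /=; apply: ler_sum => x _.
by rewrite -mulr_sumr P_sum1 mulr1.
Qed.

End Stochastic.

Definition path_expect (R : realType) n (P : 'M[R]_n) N (mu : 'I_n -> R)
  (F : {ffun 'I_N.+1 -> 'I_n} -> R) := \sum_w path_prob mu P w * F w.
Arguments path_expect {R n} P N mu F.

Section PathExpectation.
Variables (R : realType) (n : nat) (P : 'M[R]_n).

Definition path_cons N (x : 'I_n) (w : {ffun 'I_N.+1 -> 'I_n}) :
  {ffun 'I_N.+2 -> 'I_n} := [ffun i => if unlift ord0 i is Some j then w j else x].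

Lemma path_cons0 N x (w : {ffun 'I_N.+1 -> 'I_n}) : path_cons x w ord0 = x.
Proof. by rewrite ffunE unlift_none. Qed.

Lemma path_consS N x (w : {ffun 'I_N.+1 -> 'I_n}) j : path_cons x w (lift ord0 j) = w j.
Proof. by rewrite ffunE liftK. Qed.

Lemma path_cons_inord N x (w : {ffun 'I_N.+1 -> 'I_n}) t : (t <= N)%N ->
  path_cons x w (inord t.+1) = w (inord t).
Proof.
move=> tN; have -> : inord t.+1 = lift ord0 (inord t : 'I_N.+1).
  by apply: val_inj; rewrite /= /bump /= add1n !inordK.
exact: path_consS.
Qed.

Lemma big_path_cons N (G : {ffun 'I_N.+2 -> 'I_n} -> R) :
  \sum_w G w = \sum_x \sum_(w : {ffun 'I_N.+1 -> 'I_n}) G (path_cons x w).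
Proof.
rewrite pair_big /=.
apply: (reindex (fun p : 'I_n * {ffun 'I_N.+1 -> 'I_n} => path_cons p.1 p.2)).
exists (fun w : {ffun _} => (w ord0, [ffun j : 'I_N.+1 => w (lift ord0 j)])) => [[x w] _ | w _] /=.
  by rewrite path_cons0; congr pair; apply/ffunP => j; rewrite ffunE path_consS.
by apply/ffunP => i; rewrite ffunE; case: unliftP => [j ->|->]; rewrite ?ffunE.
Qed.

Lemma big_path1 (G : {ffun 'I_1 -> 'I_n} -> R) : \sum_w G w = \sum_x G [ffun => x].
Proof.
apply: (reindex (fun x => [ffun => x])).
exists (fun w : {ffun _} => w ord0) => [x _ | w _]; first by rewrite ffunE.
by apply/ffunP => i; rewrite ffunE (ord1 i).
Qed.

Lemma path_prob_cons N mu x (w : {ffun 'I_N.+1 -> 'I_n}) :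
  path_prob mu P (path_cons x w) = mu x * path_prob (P x) P w.
Proof.
rewrite /path_prob big_ord_recl.
have -> : widen_ord (leqnSn N.+1) ord0 = ord0 by apply: val_inj.
rewrite path_cons0 path_consS !mulrA; congr (_ * _).
apply: eq_bigr => i _.
have -> : widen_ord (leqnSn N.+1) (lift ord0 i) = lift ord0 (widen_ord (leqnSn N) i).
  exact: val_inj.
by rewrite !path_consS.
Qed.

Lemma eq_path_expect N mu (F G : {ffun 'I_N.+1 -> 'I_n} -> R) :
  F =1 G -> path_expect P N mu F = path_expect P N mu G.
Proof. by move=> FG; apply: eq_bigr => w _; rewrite FG. Qed.

Lemma path_expect_cons N mu (F : {ffun 'I_N.+2 -> 'I_n} -> R) :
  path_expect P N.+1 mu F =
  \sum_x mu x * path_expect P N (P x) (fun w => F (path_cons x w)).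
Proof.
rewrite /path_expect big_path_cons; apply: eq_bigr => x _; rewrite mulr_sumr.
by apply: eq_bigr => w _; rewrite path_prob_cons mulrA.
Qed.

Hypothesis P_stoch : transition_matrix P.

Lemma path_expect_cst N mu c : path_expect P N mu (fun=> c) = c * \sum_x mu x.
Proof.
elim: N mu => [|N IHN] mu.
  rewrite /path_expect big_path1 mulr_sumr; apply: eq_bigr => x _.
  by rewrite /path_prob big_ord0 ffunE mulr1 mulrC.
rewrite path_expect_cons mulr_sumr; apply: eq_bigr => x _.
by rewrite IHN (proj2 P_stoch) mulr1 mulrC.
Qed.

Lemma path_expect_head N mu (g : 'I_n -> R) :
  path_expect P N mu (fun w => g (w ord0)) = \sum_x mu x * g x.
Proof.
case: N => [|N].
  rewrite /path_expect big_path1; apply: eq_bigr => x _.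
  by rewrite /path_prob big_ord0 !ffunE mulr1.
rewrite path_expect_cons; apply: eq_bigr => x _.
rewrite (@eq_path_expect _ _ _ (fun=> g x)) => [|w]; last by rewrite path_cons0.
by rewrite path_expect_cst (proj2 P_stoch) mulr1.
Qed.

Lemma path_expect_head_pair t N mu (g h : 'I_n -> R) : (t <= N)%N ->
  path_expect P N mu (fun w => g (w ord0) * h (w (inord t))) =
  \sum_x mu x * g x * \sum_y (P ^+ t) x y * h y.
Proof.
elim: t N mu g => [|t IHt] N mu g tN.
  rewrite (@eq_path_expect _ _ _ (fun w => (g \* h) (w ord0))) => [|w]; last first.
    by congr (_ * h (w _)); apply: val_inj; rewrite /= inordK.
  by rewrite path_expect_head; apply: eq_bigr => x _; rewrite sum_mx1_mulr mulrA.
case: N tN => [//|N] tN.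
rewrite path_expect_cons; apply: eq_bigr => x _.
rewrite (@eq_path_expect _ _ _ (fun w => g x * h (w (inord t)))) => [|w]; last first.
  by rewrite path_cons0 path_cons_inord.
rewrite (IHt N (P x) (fun=> g x)) // exprS sum_mulmx_mulr -mulrA; congr (_ * _).
by rewrite mulr_sumr; apply: eq_bigr => z _; rewrite mulrAC mulrC.
Qed.

Lemma path_expect_pair s t N mu (g h : 'I_n -> R) : (s <= t <= N)%N ->
  path_expect P N mu (fun w => g (w (inord s)) * h (w (inord t))) =
  \sum_x (\sum_z mu z * (P ^+ s) z x) * g x * \sum_y (P ^+ (t - s)) x y * h y.
Proof.
elim: s t N mu => [|s IHs] t N mu /andP[st tN].
  rewrite (@eq_path_expect _ _ _ (fun w => g (w ord0) * h (w (inord t)))) => [|w].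
    rewrite path_expect_head_pair // subn0.
    by apply: eq_bigr => x _; rewrite sum_mulr_mx1.
  by congr (g (w _) * _); apply: val_inj; rewrite /= inordK.
case: t st tN => [//|t] st tN; case: N tN => [//|N] tN.
rewrite path_expect_cons.
under eq_bigr => x _.
  rewrite (@eq_path_expect _ _ _ (fun w => g (w (inord s)) * h (w (inord t)))); last first.
    by move=> w; rewrite !path_cons_inord //; lia.
  rewrite IHs; last exact/andP.
  over.
rewrite subSS; under eq_bigr do rewrite mulr_sumr.
rewrite exchange_big /=; apply: eq_bigr => y _.
under eq_bigr do rewrite !mulrA; rewrite -!mulr_suml exprS; congr (_ * _ * _).
by apply: eq_bigr => x _; rewrite mxE.
Qed.

End PathExpectation.

Section StationaryVariance.
Variables (R : realType) (n : nat) (pi : 'I_n -> R) (P : 'M[R]_n).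
Hypotheses (P_stoch : transition_matrix P)
  (pi_stat : forall y, \sum_x pi x * P x y = pi y).

Lemma stationaryX k y : \sum_x pi x * (P ^+ k) x y = pi y.
Proof.
elim: k y => [|k IHk] y; first exact: sum_mulr_mx1.
by rewrite exprSr sum_mulr_mulmx; under eq_bigr do rewrite IHk.
Qed.

Definition pi_mean (f : 'I_n -> R) := \sum_x pi x * f x.

Definition autocov (h : 'I_n -> R) k := \sum_x pi x * h x * \sum_y (P ^+ k) x y * h y.

Lemma path_expect_stationary N (f : 'I_n -> R) (t : 'I_N.+1) :
  path_expect P N pi (fun w => f (w t)) = pi_mean f.
Proof.
have tN : (t <= t <= N)%N by rewrite leqnn -ltnS ltn_ord.
have := path_expect_pair P_stoch pi f (fun=> 1) tN; rewrite subnn.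
under eq_bigr do rewrite stationaryX sum_mx1_mulr mulr1.
by rewrite /pi_mean => <-; apply: eq_path_expect => w; rewrite inord_val mulr1.
Qed.

Lemma path_expect_stationary_pair N (h : 'I_n -> R) (s t : 'I_N.+1) :
  path_expect P N pi (fun w => h (w s) * h (w t)) = autocov h `|s - t|.
Proof.
wlog st : s t / (s <= t)%N => [wlog_st|].
  case: (leqP s t) => [/wlog_st //|/ltnW ts].
  rewrite distnC -wlog_st //; apply: eq_path_expect => w; exact: mulrC.
have stN : (s <= t <= N)%N by rewrite st -ltnS ltn_ord.
rewrite distnEr // -[s in LHS]inord_val -[t in LHS]inord_val path_expect_pair //.
by apply: eq_bigr => x _; rewrite stationaryX.
Qed.

Lemma path_mean_stationary f N : path_mean pi P f N = N.+1%:R * pi_mean f.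
Proof.
rewrite /path_mean /path_sum; under eq_bigr do rewrite mulr_sumr.
rewrite exchange_big /=.
transitivity (\sum_(t < N.+1) pi_mean f); last by rewrite sumr_const card_ord mulr_natl.
by apply: eq_bigr => t _; apply: path_expect_stationary.
Qed.

Lemma path_var_autocov f N : path_var pi P f N =
  \sum_(s < N.+1) \sum_(t < N.+1) autocov (fun x => f x - pi_mean f) `|s - t|.
Proof.
set h := fun x => f x - pi_mean f.
have centered w : path_sum f w - path_mean pi P f N = \sum_(t < N.+1) h (w t).
  rewrite path_mean_stationary /path_sum sumrB; congr (_ - _).
  by rewrite sumr_const card_ord mulr_natl.
rewrite /path_var; under eq_bigr do rewrite centered expr2 mulr_suml mulr_sumr.
rewrite exchange_big; apply: eq_bigr => s _.
under eq_bigr do rewrite !mulr_sumr.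
rewrite exchange_big; apply: eq_bigr => t _.
exact: path_expect_stationary_pair.
Qed.
End StationaryVariance.

Section DistancePowerSum.
Variable R : comPzRingType.
Implicit Types (d : R) (N : nat).

Definition dist_pow_sum d N := \sum_(s < N.+1) \sum_(t < N.+1) d ^+ `|s - t|.

Lemma geometric_tail_closed d N :
  (1 - d) * \sum_(s < N.+1) d ^+ (N.+1 - s) = d * (1 - d ^+ N.+1).
Proof.
elim: N => [|N IHN]; first by rewrite big_ord1 subn0 expr1; ring.
rewrite big_ord_recl subn0.
under eq_bigr do rewrite lift0 subSS.
by rewrite mulrDr IHN !exprS; ring.
Qed.

Lemma dist_pow_sumS d N :
  dist_pow_sum d N.+1 = dist_pow_sum d N + 2 * \sum_(s < N.+1) d ^+ (N.+1 - s) + 1.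
Proof.
have dist_last (i : 'I_N.+1) : (`|i - N.+1| = N.+1 - i)%N by rewrite distnEr // ltnW.
have dist_lastC (i : 'I_N.+1) : (`|N.+1 - i| = N.+1 - i)%N by rewrite distnC dist_last.
rewrite /dist_pow_sum [LHS]big_ord_recr [\sum_(t < N.+2) _]big_ord_recr /= distnn expr0.
under eq_bigr do rewrite big_ord_recr /= dist_last.
under [\sum_(i < N.+1) d ^+ `|N.+1 - i|]eq_bigr do rewrite dist_lastC.
by rewrite big_split /=; ring.
Qed.

Lemma dist_pow_sum_closed d N :
  (1 - d) ^+ 2 * dist_pow_sum d N = N.+1%:R * (1 - d ^+ 2) - 2 * d * (1 - d ^+ N.+1).
Proof.
elim: N => [|N IHN].
  by rewrite /dist_pow_sum !big_ord1 distnn expr0; ring.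
have expand : (1 - d) ^+ 2 * dist_pow_sum d N.+1 = (1 - d) ^+ 2 * dist_pow_sum d N +
    2 * (1 - d) * ((1 - d) * \sum_(s < N.+1) d ^+ (N.+1 - s)) + (1 - d) ^+ 2.
  by rewrite dist_pow_sumS; ring.
by rewrite expand IHN geometric_tail_closed -natr1 !exprS; ring.
Qed.
End DistancePowerSum.

Section DistancePowerSumLimit.
Variable R : realType.

Lemma cvg_bounded_divSn (u : nat -> R) : (forall N, `|u N| <= 1) ->
  ((fun N => u N / N.+1%:R) @ \oo --> (0 : R))%classic.
Proof.
move=> u_le1.
apply: (@squeeze_cvgr _ _ _ _ (fun N => - harmonic N) (@harmonic R)).
- apply: nearW => N /=.
  by rewrite -ler_norml normrM normfV normr_nat ler_piMl ?invr_ge0 ?ler0n.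
- by rewrite -oppr0; apply: cvgN; exact: cvg_harmonic.
- exact: cvg_harmonic.
Qed.

Lemma dist_pow_sum_cvg (d : R) : -1 <= d -> d < 1 ->
  ((fun N => dist_pow_sum d N / N.+1%:R) @ \oo --> (1 + d) / (1 - d))%classic.
Proof.
move=> d_ge d_lt.
have d1_neq0 : 1 - d != 0 by rewrite subr_eq0 eq_sym lt_eqF.
pose u N := (1 - d ^+ N.+1) / 2.
have -> : (fun N => dist_pow_sum d N / N.+1%:R) =
    (fun N => (1 + d) / (1 - d) - 4 * d / (1 - d) ^+ 2 * (u N / N.+1%:R)).
  apply: funext => N; apply: (mulfI (expf_neq0 2 d1_neq0)).
  rewrite mulrA dist_pow_sum_closed /u.
  by field; rewrite d1_neq0 andbT addrC natr1 pnatr_eq0.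
have u_le1 N : `|u N| <= 1.
  have dN_le1 : `|d ^+ N.+1| <= 1 by rewrite normrX exprn_ile1 // ler_norml d_ge ltW.
  rewrite /u normrM normfV normr_nat ler_pdivrMr // mul1r.
  by rewrite (le_trans (ler_normB _ _)) // normr1; lra.
rewrite -[X in (_ --> X)%classic]subr0 -(mulr0 (4 * d / (1 - d) ^+ 2)).
apply: cvgB; first exact: cvg_cst.
by apply: cvgMl_tmp; apply: cvg_bounded_divSn.
Qed.
End DistancePowerSumLimit.

Section ReversibleChain.
Variables (R : realType) (n : nat) (pi : 'I_n -> R) (P : 'M[R]_n).
Hypotheses (pi_dist : prob_dist pi) (P_stoch : transition_matrix P)
  (P_rev : reversible pi P).

Lemma reversible_stationary y : \sum_x pi x * P x y = pi y.
Proof. by under eq_bigr do rewrite P_rev; rewrite -mulr_sumr (proj2 P_stoch) mulr1. Qed.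

Let pi_neq0 x : pi x != 0. Proof. by rewrite gt_eqF // (proj1 pi_dist). Qed.

Let rpi x := Num.sqrt (pi x).

Let rpi_neq0 x : rpi x != 0.
Proof. by rewrite gt_eqF // sqrtr_gt0 (proj1 pi_dist). Qed.

Let rpiK x : rpi x * rpi x = pi x.
Proof. by rewrite -expr2 sqr_sqrtr // ltW // (proj1 pi_dist). Qed.

Definition Psym : 'M[R]_n := \matrix_(x, y) (rpi x * P x y / rpi y).

Lemma Psym_tr : Psym^T = Psym.
Proof.
apply/matrixP => x y; rewrite !mxE; apply/eqP.
rewrite eqr_div ?rpi_neq0 //; apply/eqP.
have := P_rev y x; rewrite -!rpiK => rev_yx.
by rewrite mulrAC [in RHS]mulrAC rev_yx.
Qed.

Lemma PsymX k x y : (Psym ^+ k) x y = rpi x * (P ^+ k) x y / rpi y.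
Proof.
elim: k x y => [|k IHk] x y.
  by rewrite !expr0 !mxE; case: eqP => [->|_]; rewrite ?mulr0 ?mul0r // mulr1 divff.
rewrite !exprS -!mulmxE !mxE mulr_sumr mulr_suml; apply: eq_bigr => z _.
by rewrite !mxE IHk; field; rewrite !rpi_neq0.
Qed.

Lemma autocov_Psym (h : 'I_n -> R) k :
  autocov pi P h k = (\row_x (rpi x * h x) *m Psym ^+ k *m (\row_x (rpi x * h x))^T) 0 0.
Proof.
rewrite mxE /autocov; under [RHS]eq_bigr do rewrite !mxE mulr_suml.
rewrite exchange_big /=; apply: eq_bigr => x _; rewrite mulr_sumr.
by apply: eq_bigr => y _; rewrite !mxE PsymX -rpiK; field; rewrite rpi_neq0.
Qed.

Lemma Psym_left_eigen (e : 'rV[R]_n) a : e *m Psym = a *: e ->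
  \row_x (e 0 x * rpi x) *m P = a *: \row_x (e 0 x * rpi x).
Proof.
move=> /rowP e_eigen; apply/rowP => y; have := e_eigen y; rewrite !mxE => eigen_y.
rewrite mulrA -eigen_y mulr_suml; apply: eq_bigr => x _; rewrite !mxE.
by field; rewrite rpi_neq0.
Qed.

Lemma left_eigen1_orth (h : 'I_n -> R) (w : 'rV[R]_n) : irreducible P ->
  w *m P = w -> pi_mean pi h = 0 -> \sum_x h x * w 0 x = 0.
Proof.
move=> P_irr wP h_centered; pose g x := w 0 x / pi x.
have g_harm x : \sum_y P x y * g y = g x.
  transitivity ((\sum_y w 0 y * P y x) / pi x); last first.
    by move/rowP: wP => /(_ x); rewrite mxE => ->.
  rewrite mulr_suml; apply: eq_bigr => y _.
  have -> : P x y = pi y * P y x / pi x by rewrite -P_rev mulrC mulKf.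
  by rewrite /g; field; rewrite !pi_neq0.
have g_const := irreducible_harmonic_const P_stoch P_irr g_harm.
have [x0 _|no_state] := pickP (@predT 'I_n); last first.
  by rewrite big_pred0.
transitivity (g x0 * pi_mean pi h); last by rewrite h_centered mulr0.
rewrite /pi_mean mulr_sumr; apply: eq_bigr => x _.
by rewrite -(g_const x) /g; field; rewrite pi_neq0.
Qed.

Lemma ordered_spectrum_head lam (i : 'I_n) : ordered_spectrum P lam ->
  val i = 0%N -> lam i = 1.
Proof.
move=> P_spec i0.
have pi_eigen : (\row_x pi x) *m P = 1 *: \row_x pi x.
  apply/rowP => y; rewrite !mxE mul1r -reversible_stationary.
  by apply: eq_bigr => x _; rewrite mxE.
have pi_row_neq0 : \row_x pi x != 0.
  by apply/eqP => /rowP/(_ i)/eqP; rewrite !mxE (negbTE (pi_neq0 i)).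
have [j lam_j] : exists j, 1 = lam j.
  by apply: (ordered_spectrum_root P_spec); apply/eigenvalueP; exists (\row_x pi x).
have [w w_eigen w_neq0] := eigenvalueP (ordered_spectrum_eigenvalue P_spec i).
have := left_eigenvalue_norm_le1 P_stoch w_neq0 w_eigen; rewrite ler_norml => /andP[_ le1].
by apply/eqP; rewrite eq_le le1 lam_j (proj2 P_spec) // i0.
Qed.

Let weight (E : 'M[R]_(n + n, n)) (f : 'I_n -> R) j : R :=
  ((\row_x (rpi x * (f x - pi_mean pi f))) *m E^T) 0 j ^+ 2.

Section EigenframeWeight.
Variables (E : 'M[R]_(n + n, n)) (d : 'rV[R]_(n + n)) (f : 'I_n -> R).
Hypotheses (E_tight : E^T *m E = 1%:M) (E_eigen : E *m Psym = diag_mx d *m E).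

Let h x := f x - pi_mean pi f.

Let h_centered : pi_mean pi h = 0.
Proof.
rewrite /pi_mean /h; under eq_bigr do rewrite mulrBr.
by rewrite sumrB -mulr_suml (proj2 pi_dist) mul1r subrr.
Qed.

Lemma autocov_eigenframe k : autocov pi P h k = \sum_j weight E f j * d 0 j ^+ k.
Proof. by rewrite autocov_Psym (eigenframe_quad_exp E_tight E_eigen). Qed.

Lemma sum_eigenframe_weight : \sum_j weight E f j = pi_mean pi (fun x => h x ^+ 2).
Proof.
have := autocov_eigenframe 0; under eq_bigr do rewrite expr0 mulr1.
move=> <-; apply: eq_bigr => x _.
by rewrite expr0 sum_mx1_mulr -mulrA -expr2.
Qed.

Lemma eigenframe_weight_eigen j : weight E f j != 0 ->
  exists2 w : 'rV[R]_n, w *m P = d 0 j *: w & \sum_x h x * w 0 x != 0.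
Proof.
set w := \row_x (E j x * rpi x).
have -> : weight E f j = (\sum_x h x * w 0 x) ^+ 2.
  by rewrite /weight mxE; congr (_ ^+ 2); apply: eq_bigr => x _; rewrite !mxE /h; ring.
rewrite sqrf_eq0 => inner_neq0; exists w => //.
have := Psym_left_eigen (eigenframe_row_eigen E_eigen j).
by congr (_ *m _ = _ *: _); apply/rowP => x; rewrite !mxE.
Qed.

Hypothesis P_irr : irreducible P.

Lemma eigenframe_weight_bound j : weight E f j != 0 -> -1 <= d 0 j < 1.
Proof.
move=> /eigenframe_weight_eigen[w w_eigen inner_neq0].
have w_neq0 : w != 0.
  by apply: contraNneq inner_neq0 => ->; rewrite big1 // => x _; rewrite mxE mulr0.
have := left_eigenvalue_norm_le1 P_stoch w_neq0 w_eigen.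
rewrite ler_norml lt_neqAle => /andP[-> ->]; rewrite andbT /=.
apply: contraNneq inner_neq0 => d1; apply/eqP.
by apply: left_eigen1_orth => //; rewrite w_eigen d1 scale1r.
Qed.

Lemma asymp_var_eigenframe :
  asymp_var pi P f (\sum_j weight E f j * ((1 + d 0 j) / (1 - d 0 j))).
Proof.
have avg_varE : avg_var pi P f =
    fun N => \sum_j weight E f j * (dist_pow_sum (d 0 j) N / N.+1%:R).
  apply: funext => N; rewrite /avg_var (path_var_autocov P_stoch reversible_stationary).
  under eq_bigr do under eq_bigr do rewrite autocov_eigenframe.
  under [RHS]eq_bigr do rewrite mulrA.
  rewrite -mulr_suml; congr (_ / _).
  under eq_bigr do rewrite exchange_big /=.
  rewrite exchange_big /=; apply: eq_bigr => j _.
  by rewrite /dist_pow_sum mulr_sumr; apply: eq_bigr => s _; rewrite mulr_sumr.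
rewrite /asymp_var avg_varE.
apply: cvg_big => // [|j _]; first exact: add_continuous.
have [->|weight_neq0] := eqVneq (weight E f j) 0.
  by rewrite mul0r; under eq_cvg do rewrite mul0r; apply: cvg_cst.
have /andP[d_ge d_lt] := eigenframe_weight_bound weight_neq0.
by apply: cvgMl_tmp; apply: dist_pow_sum_cvg.
Qed.

End EigenframeWeight.

Lemma asymp_var_spectral (lam f : 'I_n -> R) : irreducible P -> ordered_spectrum P lam ->
  exists W d : 'I_(n + n) -> R,
    [/\ forall j, 0 <= W j,
        \sum_j W j = pi_mean pi (fun x => (f x - pi_mean pi f) ^+ 2),
        forall j, W j != 0 ->
          [/\ -1 <= d j, d j < 1 & exists2 i : 'I_n, (0 < i)%N & d j = lam i]
      & asymp_var pi P f (\sum_j W j * ((1 + d j) / (1 - d j)))].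
Proof.
move=> P_irr P_spec.
have [E [d [E_tight E_eigen]]] := symmetric_eigenframe Psym_tr.
exists (weight E f), (fun j => d 0 j); split.
- by move=> j; apply: sqr_ge0.
- exact: sum_eigenframe_weight E_tight E_eigen.
- move=> j weight_neq0.
  have /andP[d_ge d_lt] := eigenframe_weight_bound E_eigen P_irr weight_neq0.
  have [w w_eigen inner_neq0] := eigenframe_weight_eigen E_eigen weight_neq0.
  have w_neq0 : w != 0.
    by apply: contraNneq inner_neq0 => ->; rewrite big1 // => x _; rewrite mxE mulr0.
  have [i d_lam] : exists i, d 0 j = lam i.
    by apply: (ordered_spectrum_root P_spec); apply/eigenvalueP; exists w.
  split => //; exists i => //; rewrite lt0n; apply: contraTneq d_lt => i0.
  by rewrite d_lam (ordered_spectrum_head P_spec i0) ltxx.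
- exact: asymp_var_eigenframe E_tight E_eigen P_irr.
Qed.
End ReversibleChain.

Lemma ler_weighted_sums (R : realDomainType) (I J : finType) (W : I -> R) (V : J -> R)
    (a : I -> R) (b : J -> R) :
  (forall i, 0 <= W i) -> (forall j, 0 <= V j) -> \sum_i W i = \sum_j V j ->
  (forall i j, W i != 0 -> V j != 0 -> a i <= b j) ->
  \sum_i W i * a i <= \sum_j V j * b j.
Proof.
move=> W_ge0 V_ge0 same_mass a_le_b.
have [mass0|mass_neq0] := eqVneq (\sum_i W i) 0.
  have W0 := psumr_eq0P (fun i _ => W_ge0 i) mass0.
  have V0 := psumr_eq0P (fun j _ => V_ge0 j) (etrans (esym same_mass) mass0).
  by rewrite !big1 // => ? _; rewrite ?W0 ?V0 // mul0r.
have mass_gt0 : 0 < \sum_i W i by rewrite lt_def mass_neq0 sumr_ge0.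
rewrite -(ler_pM2l mass_gt0) [X in X * _ <= _]same_mass !mulr_suml.
under eq_bigr do rewrite mulr_sumr; under [X in _ <= X]eq_bigr do rewrite mulr_sumr.
rewrite [X in _ <= X]exchange_big /=; apply: ler_sum => j _; apply: ler_sum => i _.
rewrite mulrCA.
have [->|W_neq0] := eqVneq (W i) 0; first by rewrite !(mul0r, mulr0).
have [->|V_neq0] := eqVneq (V j) 0; first by rewrite !(mul0r, mulr0).
by rewrite ler_wpM2l // ler_wpM2l // a_le_b.
Qed.

Lemma ler_inefficiency_factor (R : realFieldType) (a b : R) :
  -1 <= a -> a <= b -> b < 1 -> (1 + a) / (1 - a) <= (1 + b) / (1 - b).
Proof.
move=> a_ge a_le_b b_lt.
have a1_gt0 : 0 < 1 - a by rewrite subr_gt0 (le_lt_trans a_le_b).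
have b1_gt0 : 0 < 1 - b by rewrite subr_gt0.
by rewrite ler_pdivrMr // mulrAC ler_pdivlMr //; nra.
Qed.

Theorem theorem6 (R : realType) (n : nat) (pi : 'I_n -> R) (P Q : 'M[R]_n)
  (lam bet : 'I_n -> R) :
  prob_dist pi ->
  transition_matrix P -> transition_matrix Q ->
  reversible pi P -> reversible pi Q ->
  irreducible P -> irreducible Q ->
  ordered_spectrum P lam -> ordered_spectrum Q bet ->
  (forall i j : 'I_n, (1 <= i)%N -> (1 <= j)%N -> lam i <= bet j) ->
  efficiency_dominates pi P Q.
Proof.
move=> pi_dist P_stoch Q_stoch P_rev Q_rev P_irr Q_irr P_spec Q_spec lam_le_bet f.
have [W [d [W_ge0 W_mass W_spec P_var]]] :=
  asymp_var_spectral pi_dist P_stoch P_rev f P_irr P_spec.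
have [V [e [V_ge0 V_mass V_spec Q_var]]] :=
  asymp_var_spectral pi_dist Q_stoch Q_rev f Q_irr Q_spec.
exists (\sum_j W j * ((1 + d j) / (1 - d j))), (\sum_j V j * ((1 + e j) / (1 - e j))).
split=> //; split=> //; apply: ler_weighted_sums => //; first by rewrite W_mass V_mass.
move=> i j /W_spec[d_ge _ [k k_gt0 d_lam]] /V_spec[_ e_lt [l l_gt0 e_bet]].
by apply: ler_inefficiency_factor => //; rewrite d_lam e_bet lam_le_bet.
Qed.
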